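(* Let $G$ be a topological group and $\rho:G\to U(N)$ a continuous unitary representation. For $V\in PU(N)$ commuting with $\rho(g)$ for all $g$, choose a lift $\tilde V\in U(N)$; then $\rho(g)^\dagger\tilde V\rho(g)=\chi[V](g)\tilde V$ defines a one-dimensional representation $\chi[V]:G\to U(1)$ independent of the lift. The path components of the space of $\rho$-symmetric projective unitaries in $PU(N)$ are in bijection with the values of $\chi[V]$ attained, each attained value having finite order; every element of finite order in $X_G=\mathrm{Hom}(G,U(1))$ (the torsion subgroup $X_G^T$) is attained for a suitable representation $\rho$ (namely $\rho=\bigoplus_{p=0}^{n-1}\chi^p$ if $\chi$ has order $n$). Moreover $\chi[V]$ is stable under $V\mapsto V\otimes\mathbb{1}$ and satisfies $\chi[V\otimes Q]=\chi[V]\chi[Q]$.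
   Context: $X_G$ is the group of continuous homomorphisms $G\to U(1)$ with pointwise multiplication; $X_G^T$ its subgroup of elements of finite order. A projective unitary is $\rho$-symmetric if it commutes with $\rho(g)$ in $PU(N)$ for all $g\in G$. *)

From HB Require Import structures.
From mathcomp Require Import all_boot all_order all_algebra.
From mathcomp Require Import generic_quotient.
From mathcomp Require Import all_classical all_reals all_analysis.
From mathcomp.real_closed Require Import complex mxtens.

Set Implicit Arguments.
Unset Strict Implicit.
Unset Printing Implicit Defensive.

Import Order.TTheory GRing.Theory Num.Theory.
Import numFieldNormedType.Exports.
Local Open Scope ring_scope.
Local Open Scope classical_set_scope.
Local Open Scope quotient_scope.

Definition topological_group (G : topologicalType)
  (mul : G -> G -> G) (inv : G -> G) (one : G) : Prop :=
  [/\ (forall x y z, mul x (mul y z) = mul (mul x y) z),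
      (forall x, mul one x = x),
      (forall x, mul (inv x) x = one),
      continuous (fun p : G * G => mul p.1 p.2) &
      continuous inv].

Definition reim (R : realType) (z : R[i]) : R * R := (complex.Re z, complex.Im z).

Definition Ctop (R : realType) : Type := R[i].
HB.instance Definition _ (R : realType) := Choice.on (Ctop R).
HB.instance Definition _ (R : realType) :=
  Topological.copy (Ctop R) (initial_topology (@reim R)).

Definition reim_mx (R : realType) (N : nat) (A : 'M[R[i]]_N) :
  'M[R]_N * 'M[R]_N := (map_mx (@complex.Re R) A, map_mx (@complex.Im R) A).

Definition Mtop (R : realType) (N : nat) : Type := 'M[R[i]]_N.
HB.instance Definition _ (R : realType) N := Choice.on (Mtop R N).
HB.instance Definition _ (R : realType) N :=
  Topological.copy (Mtop R N) (initial_topology (@reim_mx R N)).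

Definition adjmx (R : realType) (m n : nat) (A : 'M[R[i]]_(m, n)) : 'M[R[i]]_(n, m) :=
  (map_mx (@conjc R) A)^T.

Definition unitary (R : realType) (N : nat) (A : 'M[R[i]]_N) : Prop :=
  A *m adjmx A = 1%:M.

Definition unitary_set (R : realType) (N : nat) : set (Mtop R N) :=
  [set A | unitary A].

Definition UN (R : realType) (N : nat) : Type := set_type (@unitary_set R N).

Definition Uval (R : realType) (N : nat) (u : UN R N) : 'M[R[i]]_N := set_val u.

Definition phase_rel (R : realType) (N : nat) : rel (UN R N) :=
  fun u v => `[< exists c : R[i], `|c| = 1 /\ Uval u = c *: Uval v >].

Lemma phase_rel_refl R N : reflexive (@phase_rel R N).
Proof. by move=> u; apply/asboolP; exists 1; rewrite normr1 scale1r. Qed.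

Lemma normc1_conj (R : realType) (c : R[i]) : `|c| = 1 -> c * conjc c = 1.
Proof. by move=> h; rewrite -sqr_normc h expr1n. Qed.

Lemma phase_rel_sym R N : symmetric (@phase_rel R N).
Proof.
move=> u v; apply/asboolP/asboolP => -[c [c1 e]]; exists (conjc c);
  (split; first by rewrite normcJ).
- by rewrite e scalerA mulrC normc1_conj // scale1r.
- by rewrite e scalerA mulrC normc1_conj // scale1r.
Qed.

Lemma phase_rel_trans R N : transitive (@phase_rel R N).
Proof.
move=> v u w /asboolP [c [c1 e1]] /asboolP [d [d1 e2]]; apply/asboolP.
by exists (c * d); rewrite normrM c1 d1 mulr1 e1 e2 scalerA.
Qed.

Canonical phase_equiv R N :=
  EquivRel (@phase_rel R N) (@phase_rel_refl R N)
           (@phase_rel_sym R N) (@phase_rel_trans R N).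

Definition PU (R : realType) (N : nat) : Type :=
  quotient_topology {eq_quot (@phase_equiv R N)}.

Definition lift (R : realType) (N : nat) (V : PU R N) : 'M[R[i]]_N :=
  Uval (repr V).

Definition unitary_rep (R : realType) (G : topologicalType) (mul : G -> G -> G)
  (N : nat) (rho : G -> 'M[R[i]]_N) : Prop :=
  [/\ (forall g, unitary (rho g)),
      (forall g h, rho (mul g h) = rho g *m rho h) &
      continuous (rho : G -> Mtop R N)].

Definition in_XG (R : realType) (G : topologicalType) (mul : G -> G -> G)
  (chi : G -> R[i]) : Prop :=
  [/\ (forall g, `|chi g| = 1),
      (forall g h, chi (mul g h) = chi g * chi h) &
      continuous (chi : G -> Ctop R)].

Definition rho_symmetric (R : realType) (G : Type) (N : nat)
  (rho : G -> 'M[R[i]]_N) (V : PU R N) : Prop :=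
  forall g, exists c : R[i], `|c| = 1 /\
    rho g *m lift V = c *: (lift V *m rho g).

Definition chiV (R : realType) (G : Type) (N : nat)
  (rho : G -> 'M[R[i]]_N) (V : PU R N) : G -> R[i] :=
  fun g => xget 0 [set c : R[i] | adjmx (rho g) *m lift V *m rho g = c *: lift V].

Definition sym_path_connected (R : realType) (G : Type) (N : nat)
  (rho : G -> 'M[R[i]]_N) (V W : PU R N) : Prop :=
  exists gamma : R -> PU R N,
    [/\ {within `[0, 1], continuous gamma},
        gamma 0 = V, gamma 1 = W &
        forall t, t \in `[0, 1]%R -> rho_symmetric rho (gamma t)].

Lemma adjmx_tens (R : realType) m n p q (A : 'M[R[i]]_(m, n)) (B : 'M[R[i]]_(p, q)) :
  adjmx (A *t B) = adjmx A *t adjmx B.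
Proof. by rewrite /adjmx map_mxT trmx_tens. Qed.

Lemma unitary_tens (R : realType) N N' (A : 'M[R[i]]_N) (B : 'M[R[i]]_N') :
  unitary A -> unitary B -> unitary (A *t B).
Proof.
rewrite /unitary adjmx_tens => hA hB.
rewrite tensmx_mul hA hB; apply/matrixP => i j.
case: (mxtens_indexP i) => i0 i1; case: (mxtens_indexP j) => j0 j1.
rewrite tensmxE !mxE -natrM mulnb; congr (_%:R); congr nat_of_bool.
by rewrite (inj_eq (can_inj (@mxtens_indexK _ _))) xpair_eqE.
Qed.

Lemma UvalP (R : realType) (N : nat) (u : UN R N) : unitary (Uval u).
Proof. exact: (set_valP u). Qed.

Lemma unitary1 (R : realType) (N : nat) : unitary (1%:M : 'M[R[i]]_N).
Proof.
by rewrite /unitary /adjmx mul1mx map_scalar_mx rmorph1 tr_scalar_mx.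
Qed.

Definition tensU (R : realType) (N N' : nat) (u : UN R N) (v : UN R N') :
  UN R (N * N') :=
  exist _ (Uval u *t Uval v : Mtop R (N * N'))
    (mem_set (unitary_tens (UvalP u) (UvalP v))).

Definition oneU (R : realType) (N : nat) : UN R N :=
  exist _ (1%:M : Mtop R N) (mem_set (@unitary1 R N)).

Definition tensPU (R : realType) (N N' : nat) (V : PU R N) (Q : PU R N') :
  PU R (N * N') := \pi_(PU R (N * N')) (tensU (repr V) (repr Q)).

Definition onePU (R : realType) (N : nat) : PU R N := \pi_(PU R N) (oneU R N).

Definition tens_rep (R : realType) (G : Type) (N N' : nat)
  (rho : G -> 'M[R[i]]_N) (rho' : G -> 'M[R[i]]_N') : G -> 'M[R[i]]_(N * N') :=
  fun g => rho g *t rho' g.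

Definition sum_powers_rep (R : realType) (G : Type) (chi : G -> R[i]) (n : nat) :
  G -> 'M[R[i]]_n :=
  fun g => diag_mx (\row_(p < n) chi g ^+ p).

Definition has_order (R : realType) (G : Type) (chi : G -> R[i]) (n : nat) : Prop :=
  [/\ (0 < n)%N,
      (forall g, chi g ^+ n = 1) &
      (forall m, (0 < m < n)%N -> exists g, chi g ^+ m != 1)].

From Pilot Require Import Defs.
From HB Require Import structures.
From mathcomp Require Import all_boot all_order all_algebra.
From mathcomp Require Import generic_quotient.
From mathcomp Require Import all_classical all_reals all_analysis.
From mathcomp.real_closed Require Import complex mxtens.
From mathcomp Require Import fingroup perm.
From mathcomp Require Import lra.

Set Implicit Arguments.
Unset Strict Implicit.
Unset Printing Implicit Defensive.

Import Order.TTheory GRing.Theory Num.Theory.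
Import numFieldNormedType.Exports.
Local Open Scope ring_scope.
Local Open Scope classical_set_scope.
Local Open Scope quotient_scope.
Local Notation lift := Defs.lift.

(* Lifts differ by phases, so chi[V] does not depend on the lift; it is
   multiplicative, continuous (a normalised trace), and takes values in the N-th roots
   of unity (take determinants).  Along a path of rho-symmetric projective unitaries
   chi[V](g) therefore moves continuously inside a finite set, so it is constant.
   Conversely, if chi[V] = chi[W] then K = W~ V~^dagger commutes with rho; after
   rotating K by a phase l with 1 + l K invertible, the Cayley transform
   t |-> (1 - t A)(1 + t A)^-1 of the skew-hermitian A = (1 + l K)^-1 (1 - l K) is a
   path of unitaries commuting with rho from 1 to l K, and multiplying it by V~
   joins V to W.  The cyclic shift of the basis realises chi on the sum of the chi^p,
   and tensor products multiply the phases. *)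

Section ComplexContinuity.
Variable R : realType.
Local Notation C := R[i].
Local Notation Re := (@complex.Re R).
Local Notation Im := (@complex.Im R).

Lemma ReD (a b : C) : Re (a + b) = Re a + Re b. Proof. by case: a; case: b. Qed.
Lemma ImD (a b : C) : Im (a + b) = Im a + Im b. Proof. by case: a; case: b. Qed.
Lemma ReN (a : C) : Re (- a) = - Re a. Proof. by case: a. Qed.
Lemma ImN (a : C) : Im (- a) = - Im a. Proof. by case: a. Qed.
Lemma ReM (a b : C) : Re (a * b) = Re a * Re b - Im a * Im b.
Proof. by case: a; case: b. Qed.
Lemma ImM (a b : C) : Im (a * b) = Re a * Im b + Im a * Re b.
Proof. by case: a; case: b. Qed.
Lemma ReJ (a : C) : Re (conjc a) = Re a. Proof. by case: a. Qed.
Lemma ImJ (a : C) : Im (conjc a) = - Im a. Proof. by case: a. Qed.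
Lemma ReV (a : C) : Re a^-1 = Re a / (Re a ^+ 2 + Im a ^+ 2).
Proof. by case: a. Qed.
Lemma ImV (a : C) : Im a^-1 = - (Im a / (Re a ^+ 2 + Im a ^+ 2)).
Proof. by case: a. Qed.

Variable T : topologicalType.
Implicit Types f g : T -> C.

Lemma eq_continuous (U : topologicalType) (f g : T -> U) :
  f =1 g -> continuous g -> continuous f.
Proof. by move=> /funext ->. Qed.

(* R[i] carries no topology in the libraries, so continuity into it is tested on the
   real and imaginary parts. *)
Definition ccontinuous f :=
  continuous (fun x => Re (f x)) /\ continuous (fun x => Im (f x)).

Lemma eq_ccontinuous f g : f =1 g -> ccontinuous g -> ccontinuous f.
Proof. by move=> /funext ->. Qed.

Lemma ccontC (c : C) : ccontinuous (fun _ => c).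
Proof. by split=> x; apply: cst_continuous. Qed.

Lemma ccont_real (h : T -> R) : continuous h -> ccontinuous (fun x => (h x)%:C%C).
Proof. by split=> //= x; apply: cst_continuous. Qed.

Lemma ccontD f g : ccontinuous f -> ccontinuous g -> ccontinuous (fun x => f x + g x).
Proof.
move=> [f1 f2] [g1 g2]; split.
- apply: (eq_continuous (fun x => ReD (f x) (g x))) => x.
  exact: continuousD (f1 x) (g1 x).
- apply: (eq_continuous (fun x => ImD (f x) (g x))) => x.
  exact: continuousD (f2 x) (g2 x).
Qed.

Lemma ccontN f : ccontinuous f -> ccontinuous (fun x => - f x).
Proof.
move=> [f1 f2]; split.
- apply: (eq_continuous (fun x => ReN (f x))) => x; exact: continuousN (f1 x).
- apply: (eq_continuous (fun x => ImN (f x))) => x; exact: continuousN (f2 x).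
Qed.

Lemma ccontM f g : ccontinuous f -> ccontinuous g -> ccontinuous (fun x => f x * g x).
Proof.
move=> [f1 f2] [g1 g2]; split.
- apply: (eq_continuous (fun x => ReM (f x) (g x))) => x.
  exact: continuousB (continuousM (f1 x) (g1 x)) (continuousM (f2 x) (g2 x)).
- apply: (eq_continuous (fun x => ImM (f x) (g x))) => x.
  exact: continuousD (continuousM (f1 x) (g2 x)) (continuousM (f2 x) (g1 x)).
Qed.

Lemma ccontJ f : ccontinuous f -> ccontinuous (fun x => conjc (f x)).
Proof.
move=> [f1 f2]; split; first exact: eq_continuous (fun x => ReJ (f x)) f1.
apply: (eq_continuous (fun x => ImJ (f x))) => x; exact: continuousN (f2 x).
Qed.

Lemma ccontV f : (forall x, f x != 0) -> ccontinuous f -> ccontinuous (fun x => (f x)^-1).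
Proof.
move=> nzf [f1 f2].
have nz2 x : Re (f x) ^+ 2 + Im (f x) ^+ 2 != 0.
  move: (nzf x); case: (f x) => a b /=; apply: contra_neq => /eqP.
  by rewrite paddr_eq0 ?sqr_ge0 // !sqrf_eq0 => /andP[/eqP-> /eqP->].
have c2 x : {for x, continuous (fun x => (Re (f x) ^+ 2 + Im (f x) ^+ 2)^-1)}.
  apply: (continuousV (s := fun y => Re (f y) ^+ 2 + Im (f y) ^+ 2) (nz2 x)).
  exact: continuousD (continuousM (f1 x) (f1 x)) (continuousM (f2 x) (f2 x)).
split.
- apply: (eq_continuous (fun x => ReV (f x))) => x; exact: continuousM (f1 x) (c2 x).
- apply: (eq_continuous (fun x => ImV (f x))) => x.
  exact: continuousN (continuousM (f2 x) (c2 x)).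
Qed.

Lemma ccontX f n : ccontinuous f -> ccontinuous (fun x => f x ^+ n).
Proof.
move=> cf; elim: n => [|n IH]; first exact: eq_ccontinuous (fun x => expr0 (f x)) (ccontC 1).
exact: eq_ccontinuous (fun x => exprS (f x) n) (ccontM cf IH).
Qed.

Lemma ccont_sum (I : Type) (r : seq I) (P : pred I) (F : I -> T -> C) :
  (forall i, ccontinuous (F i)) -> ccontinuous (fun x => \sum_(i <- r | P i) F i x).
Proof.
move=> cF; elim: r => [|a r IH].
  by apply: eq_ccontinuous (ccontC 0) => x; rewrite big_nil.
apply: eq_ccontinuous => [x|]; first by rewrite big_cons; reflexivity.
by case: (P a) => //; apply: ccontD.
Qed.

Lemma ccont_prod (I : Type) (r : seq I) (P : pred I) (F : I -> T -> C) :
  (forall i, ccontinuous (F i)) -> ccontinuous (fun x => \prod_(i <- r | P i) F i x).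
Proof.
move=> cF; elim: r => [|a r IH].
  by apply: eq_ccontinuous (ccontC 1) => x; rewrite big_nil.
apply: eq_ccontinuous => [x|]; first by rewrite big_cons; reflexivity.
by case: (P a) => //; apply: ccontM.
Qed.

Lemma continuous_CtopP (f : T -> Ctop R) : continuous f <-> ccontinuous f.
Proof.
split=> [cf|[f1 f2]]; last first.
  by apply: continuous_comp_initial => x; exact: cvg_pair (f1 x) (f2 x).
have creim x : {for x, continuous (@reim R \o f)}.
  by apply: continuous_comp (cf x) _; exact: initial_continuous.
split=> x; [apply: (continuous_comp (creim x) (g := fst))|
            apply: (continuous_comp (creim x) (g := snd))];
  case: (reim (f x)) => a b; [exact: cvg_fst|exact: cvg_snd].
Qed.

End ComplexContinuity.

Section MatrixContinuity.
Variables (R : realType) (T : topologicalType).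
Local Notation C := R[i].

Definition mxcontinuous m n (F : T -> 'M[C]_(m, n)) :=
  forall i j, ccontinuous (fun x => F x i j).

Lemma continuous_mx m n (F : T -> 'M[R]_(m, n)) :
  (forall i j, continuous (fun x => F x i j)) -> continuous F.
Proof.
move=> cF x; apply/cvg_mx_entourageP => A entA.
apply: (@filter_forall _ _ (fun i (M : 'M[R]_(m, n)) => forall j, (F x i j, M i j) \in A)) => i.
apply: filter_forall => j.
have /cvg_entourageP /(_ A entA) := cF i j x.
by move=> h; apply: (@filterS _ (nbhs x) _ _ _ _ h) => y /=; rewrite in_setE.
Qed.

Lemma continuous_MtopP N (F : T -> Mtop R N) : continuous F <-> mxcontinuous F.
Proof.
split=> [cF i j|cF]; last first.
  have cRe : continuous (fun x => map_mx (@complex.Re R) (F x)).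
    by apply: continuous_mx => i j; apply: eq_continuous (cF i j).1 => y; rewrite mxE.
  have cIm : continuous (fun x => map_mx (@complex.Im R) (F x)).
    by apply: continuous_mx => i j; apply: eq_continuous (cF i j).2 => y; rewrite mxE.
  by apply: continuous_comp_initial => x; exact: cvg_pair (cRe x) (cIm x).
have creim x : {for x, continuous (fun x => reim_mx (F x))}.
  apply: (@continuous_comp _ _ _ F (@reim_mx R N)); first exact: cF.
  exact: initial_continuous.
split.
- apply: (eq_continuous (g := fun x => (reim_mx (F x)).1 i j)) => [y|x]; first by rewrite mxE.
  apply: (@continuous_comp _ _ _ (fun x => (reim_mx (F x)).1) (fun M : 'M[R]_N => M i j));
    last exact: coord_continuous.
  apply: (@continuous_comp _ _ _ _ fst _ (creim x)).
  by case: (reim_mx (F x)) => ? ?; exact: cvg_fst.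
- apply: (eq_continuous (g := fun x => (reim_mx (F x)).2 i j)) => [y|x]; first by rewrite mxE.
  apply: (@continuous_comp _ _ _ (fun x => (reim_mx (F x)).2) (fun M : 'M[R]_N => M i j));
    last exact: coord_continuous.
  apply: (@continuous_comp _ _ _ _ snd _ (creim x)).
  by case: (reim_mx (F x)) => ? ?; exact: cvg_snd.
Qed.

Lemma eq_mxcontinuous m n (F G : T -> 'M[C]_(m, n)) :
  F =1 G -> mxcontinuous G -> mxcontinuous F.
Proof. by move=> /funext ->. Qed.

Lemma mxcontC m n (A : 'M[C]_(m, n)) : mxcontinuous (fun _ => A).
Proof. by move=> i j; apply: ccontC. Qed.

Lemma mxcontD m n (F G : T -> 'M[C]_(m, n)) :
  mxcontinuous F -> mxcontinuous G -> mxcontinuous (fun x => F x + G x).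
Proof.
by move=> cF cG i j; apply: eq_ccontinuous (ccontD (cF i j) (cG i j)) => x; rewrite mxE.
Qed.

Lemma mxcontN m n (F : T -> 'M[C]_(m, n)) :
  mxcontinuous F -> mxcontinuous (fun x => - F x).
Proof. by move=> cF i j; apply: eq_ccontinuous (ccontN (cF i j)) => x; rewrite mxE. Qed.

Lemma mxcontZ m n (c : T -> C) (F : T -> 'M[C]_(m, n)) :
  ccontinuous c -> mxcontinuous F -> mxcontinuous (fun x => c x *: F x).
Proof.
by move=> cc cF i j; apply: eq_ccontinuous (ccontM cc (cF i j)) => x; rewrite mxE.
Qed.

Lemma mxcontM m n p (F : T -> 'M[C]_(m, n)) (G : T -> 'M[C]_(n, p)) :
  mxcontinuous F -> mxcontinuous G -> mxcontinuous (fun x => F x *m G x).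
Proof.
move=> cF cG i j; apply: eq_ccontinuous => [x|]; first by rewrite mxE; reflexivity.
by apply: ccont_sum => k; apply: ccontM.
Qed.

Lemma mxcont_adj m n (F : T -> 'M[C]_(m, n)) :
  mxcontinuous F -> mxcontinuous (fun x => adjmx (F x)).
Proof. by move=> cF i j; apply: eq_ccontinuous (ccontJ (cF j i)) => x; rewrite !mxE. Qed.

Lemma ccont_trace n (F : T -> 'M[C]_n) :
  mxcontinuous F -> ccontinuous (fun x => \tr (F x)).
Proof. by move=> cF; apply: ccont_sum. Qed.

Lemma ccont_det n (F : T -> 'M[C]_n) :
  mxcontinuous F -> ccontinuous (fun x => \det (F x)).
Proof.
move=> cF; apply: ccont_sum => s; apply: ccontM; first exact: ccontC.
by apply: ccont_prod.
Qed.

Lemma mxcont_adjugate n (F : T -> 'M[C]_n) :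
  mxcontinuous F -> mxcontinuous (fun x => \adj (F x)).
Proof.
case: n F => [|n] F cF i j; first by case: i.
apply: eq_ccontinuous => [x|]; first by rewrite mxE /cofactor; reflexivity.
apply: ccontM; first exact: ccontC.
by apply: ccont_det => k l; apply: eq_ccontinuous (cF _ _) => x; rewrite !mxE.
Qed.

Lemma mxcont_invmx n (F : T -> 'M[C]_n) : (forall x, F x \in unitmx) ->
  mxcontinuous F -> mxcontinuous (fun x => invmx (F x)).
Proof.
move=> uF cF; apply: eq_mxcontinuous => [x|]; first by rewrite /invmx uF; reflexivity.
apply: mxcontZ; last exact: mxcont_adjugate.
by apply: ccontV => [x|]; [rewrite -unitfE -unitmxE|apply: ccont_det].
Qed.

End MatrixContinuity.

Section Adjoint.
Variable R : realType.
Local Notation C := R[i].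

Lemma normc1_conjl (c : C) : `|c| = 1 -> conjc c * c = 1.
Proof. by move=> h; rewrite mulrC normc1_conj. Qed.

Lemma real_complexN (s : R) : (- s)%:C%C = - s%:C%C :> C.
Proof. by apply/eqP; rewrite eq_complex /= oppr0 !eqxx. Qed.

Lemma adjmxE m n (A : 'M[C]_(m, n)) i j : adjmx A i j = conjc (A j i).
Proof. by rewrite !mxE. Qed.

Lemma adjmxK m n (A : 'M[C]_(m, n)) : adjmx (adjmx A) = A.
Proof. by apply/matrixP => i j; rewrite !mxE conjcK. Qed.

Lemma adjmxM m n p (A : 'M[C]_(m, n)) (B : 'M[C]_(n, p)) :
  adjmx (A *m B) = adjmx B *m adjmx A.
Proof. by rewrite /adjmx map_mxM trmx_mul. Qed.

Lemma adjmx1 n : adjmx (1%:M : 'M[C]_n) = 1%:M.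
Proof. by rewrite /adjmx map_scalar_mx rmorph1 tr_scalar_mx. Qed.

Lemma adjmxZ m n c (A : 'M[C]_(m, n)) : adjmx (c *: A) = conjc c *: adjmx A.
Proof. by apply/matrixP => i j; rewrite !mxE rmorphM. Qed.

Lemma adjmxD m n (A B : 'M[C]_(m, n)) : adjmx (A + B) = adjmx A + adjmx B.
Proof. by apply/matrixP => i j; rewrite !mxE rmorphD. Qed.

Lemma adjmxN m n (A : 'M[C]_(m, n)) : adjmx (- A) = - adjmx A.
Proof. by apply/matrixP => i j; rewrite !mxE rmorphN. Qed.

Lemma det_adjmx n (A : 'M[C]_n) : \det (adjmx A) = conjc (\det A).
Proof. by rewrite /adjmx det_tr det_map_mx. Qed.

Lemma adjmx_diag n (e : 'rV[C]_n) : adjmx (diag_mx e) = diag_mx (map_mx conjc e).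
Proof.
apply/matrixP => i j; rewrite adjmxE !mxE eq_sym.
by case: eqVneq => [->|_]; rewrite ?mulr1n ?mulr0n ?rmorph0.
Qed.

Lemma adjmx_dot_eq0 n (v : 'rV[C]_n) : (v *m adjmx v) 0 0 = 0 -> v = 0.
Proof.
rewrite mxE => v0; apply/matrixP => i k; rewrite (ord1 i) mxE.
have : v 0 k * adjmx v k 0 = 0.
  by apply: (psumr_eq0P _ v0) => // j _; rewrite adjmxE mulcJ_ge0.
by rewrite adjmxE => /eqP; rewrite mulf_eq0 conjc_eq0 orbb => /eqP.
Qed.

Lemma unitaryV n (A : 'M[C]_n) : unitary A -> adjmx A *m A = 1%:M.
Proof. exact: mulmx1C. Qed.

Lemma unitary_adj n (A : 'M[C]_n) : unitary A -> unitary (adjmx A).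
Proof. by rewrite /unitary adjmxK; exact: unitaryV. Qed.

Lemma unitaryM n (A B : 'M[C]_n) : unitary A -> unitary B -> unitary (A *m B).
Proof. by move=> uA uB; rewrite /unitary adjmxM mulmxA -(mulmxA A) uB mulmx1. Qed.

Lemma unitaryZ n c (A : 'M[C]_n) : `|c| = 1 -> unitary A -> unitary (c *: A).
Proof.
by move=> c1 uA; rewrite /unitary adjmxZ -scalemxAl -scalemxAr uA scalerA normc1_conj ?scale1r.
Qed.

Lemma unitary_neq0 n (A : 'M[C]_n) : (0 < n)%N -> unitary A -> A != 0.
Proof.
move=> n_gt0 uA; apply/eqP => A0; move: uA; rewrite /unitary A0 mul0mx => /matrixP.
by move=> /(_ (Ordinal n_gt0) (Ordinal n_gt0)) /eqP; rewrite !mxE eqxx eq_sym oner_eq0.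
Qed.

Lemma unitary_perm_mx n (s : 'S_n) : unitary (perm_mx s : 'M[C]_n).
Proof.
rewrite /unitary; have -> : adjmx (perm_mx s : 'M[C]_n) = perm_mx s^-1.
  rewrite -tr_perm_mx /adjmx; congr trmx; apply/matrixP => i j.
  by rewrite !mxE rmorph_nat.
by rewrite -perm_mxM mulgV perm_mx1.
Qed.

Lemma adjmx_invmx n (A : 'M[C]_n) : A \in unitmx -> adjmx (invmx A) = invmx (adjmx A).
Proof.
move=> uA; have uA' : adjmx A \in unitmx.
  by rewrite unitmxE det_adjmx unitfE conjc_eq0 -unitfE -unitmxE.
by rewrite -[RHS]mul1mx -adjmx1 -(mulmxV uA) adjmxM mulmxK.
Qed.

Lemma scalemx_injl m n (A : 'M[C]_(m, n)) c d : A != 0 -> c *: A = d *: A -> c = d.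
Proof.
move=> nzA /eqP; rewrite -subr_eq0 -scalerBl scaler_eq0 (negPf nzA) orbF subr_eq0.
by move/eqP.
Qed.

Lemma comm_mxZ n (A B : 'M[C]_n) c : comm_mx A B -> comm_mx A (c *: B).
Proof. by rewrite /comm_mx -scalemxAl -scalemxAr => ->. Qed.

Lemma comm_mx_invmx n (A B : 'M[C]_n) : B \in unitmx -> comm_mx A B -> comm_mx A (invmx B).
Proof.
move=> uB AB; rewrite /comm_mx -[invmx B *m A]mulmx1 -(mulmxV uB) !mulmxA.
by rewrite -(mulmxA _ A) AB mulmxA mulVmx // mul1mx.
Qed.

Lemma comm_mx_adj n (U A : 'M[C]_n) : unitary U -> comm_mx U A -> comm_mx (adjmx U) A.
Proof.
move=> uU UA; rewrite /comm_mx -[adjmx U *m A]mulmx1 -uU mulmxA -(mulmxA _ A) -UA.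
by rewrite !mulmxA unitaryV // mul1mx.
Qed.

Lemma tensmxZ m n p q a b (A : 'M[C]_(m, n)) (B : 'M[C]_(p, q)) :
  (a *: A) *t (b *: B) = (a * b) *: (A *t B).
Proof.
apply/matrixP => i j; case: (mxtens_indexP i) => i0 i1; case: (mxtens_indexP j) => j0 j1.
by rewrite tensmxE [RHS]mxE tensmxE !mxE mulrACA.
Qed.

End Adjoint.

Section Phase.
Variables (R : realType) (N : nat).
Local Notation C := R[i].
Local Notation PUN := (PU R N).

Lemma lift_unitary (V : PUN) : unitary (lift V).
Proof. exact: UvalP. Qed.

Lemma piPU_eqP (u v : UN R N) :
  \pi_PUN u = \pi_PUN v <-> exists c : C, `|c| = 1 /\ Uval u = c *: Uval v.
Proof.
split=> [e|e]; last by apply/(eqmodP (phase_equiv R N)); apply/asboolP.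
by have /asboolP : phase_rel u v by apply/(eqmodP (phase_equiv R N)).
Qed.

Lemma lift_pi (u : UN R N) : exists c : C, `|c| = 1 /\ lift (\pi_PUN u) = c *: Uval u.
Proof. by apply/piPU_eqP; rewrite reprK. Qed.

Definition phase_of (A U : 'M[C]_N) : C := N%:R^-1 * \tr (adjmx U *m (adjmx A *m U *m A)).

Lemma phase_ofZ A U c : `|c| = 1 -> phase_of A (c *: U) = phase_of A U.
Proof.
move=> c1; rewrite /phase_of adjmxZ -scalemxAr -scalemxAl -scalemxAl -scalemxAr.
by rewrite scalerA normc1_conjl // scale1r.
Qed.

Lemma ccont_phase_of (T : topologicalType) (A U : T -> 'M[C]_N) :
  mxcontinuous A -> mxcontinuous U -> ccontinuous (fun x => phase_of (A x) (U x)).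
Proof.
move=> cA cU; apply: ccontM; first exact: ccontC.
apply/ccont_trace/(mxcontM (mxcont_adj cU)).
by apply: mxcontM => //; apply: mxcontM (mxcont_adj cA) cU.
Qed.

Hypothesis N_gt0 : (0 < N)%N.

Lemma phase_ofE A U c : unitary U -> adjmx A *m U *m A = c *: U -> phase_of A U = c.
Proof.
move=> uU AU; rewrite /phase_of AU -scalemxAr unitaryV // mxtraceZ mxtrace1.
by rewrite mulrC mulfK // pnatr_eq0 -lt0n.
Qed.

Variables (G : Type) (rho : G -> 'M[C]_N).
Hypothesis rho_unitary : forall g, unitary (rho g).

Lemma chiV_eq (V : PUN) g c :
  adjmx (rho g) *m lift V *m rho g = c *: lift V -> chiV rho V g = c.
Proof.
move=> h; apply/esym; apply: (scalemx_injl (unitary_neq0 N_gt0 (lift_unitary V))).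
rewrite -h /chiV.
by apply: (@xgetPex _ 0 [set d : C | adjmx (rho g) *m lift V *m rho g = d *: lift V]); exists c.
Qed.

Lemma conj_scaleP (L : 'M[C]_N) g c : `|c| = 1 ->
  rho g *m L = c *: (L *m rho g) <-> adjmx (rho g) *m L *m rho g = conjc c *: L.
Proof.
move=> c1; have rhoV := unitaryV (rho_unitary g); split=> e.
  have : adjmx (rho g) *m (rho g *m L) = L by rewrite mulmxA rhoV mul1mx.
  rewrite e -scalemxAr mulmxA => e'.
  by rewrite -{2}e' scalerA normc1_conjl // scale1r.
have : rho g *m (adjmx (rho g) *m L *m rho g) = L *m rho g.
  by rewrite !mulmxA rho_unitary mul1mx.
by rewrite e -scalemxAr => e'; rewrite -e' scalerA normc1_conj // scale1r.
Qed.

Lemma chiV_spec (V : PUN) g : rho_symmetric rho V ->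
  adjmx (rho g) *m lift V *m rho g = chiV rho V g *: lift V /\ `|chiV rho V g| = 1.
Proof.
move=> /(_ g) [c [c1 /(conj_scaleP _ _ c1) e]].
by rewrite (chiV_eq e) normcJ.
Qed.

Lemma chiV_pi (V : PUN) (W : UN R N) g : rho_symmetric rho V -> \pi_PUN W = V ->
  adjmx (rho g) *m Uval W *m rho g = chiV rho V g *: Uval W.
Proof.
move=> symV WV; have [c [c1 e]] := lift_pi W; rewrite WV in e.
have -> : Uval W = conjc c *: lift V by rewrite e scalerA normc1_conjl // scale1r.
by rewrite -scalemxAr -scalemxAl (chiV_spec g symV).1 !scalerA mulrC.
Qed.

Lemma rho_symmetric_pi (u : UN R N) (d : G -> C) : (forall g, `|d g| = 1) ->
  (forall g, adjmx (rho g) *m Uval u *m rho g = d g *: Uval u) ->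
  rho_symmetric rho (\pi_PUN u) /\ chiV rho (\pi_PUN u) = d.
Proof.
move=> d1 du; have [c [_ Lu]] := lift_pi u.
have dL g : adjmx (rho g) *m lift (\pi_PUN u) *m rho g = d g *: lift (\pi_PUN u).
  by rewrite Lu -scalemxAr -scalemxAl du !scalerA mulrC.
split; last by apply: funext => g; apply: chiV_eq.
move=> g; have dJ1 : `|conjc (d g)| = 1 by rewrite normcJ.
by exists (conjc (d g)); split=> //; apply/(conj_scaleP _ _ dJ1); rewrite conjcK.
Qed.

Lemma chiV_expN (V : PUN) g : rho_symmetric rho V -> chiV rho V g ^+ N = 1.
Proof.
move=> /(chiV_spec g) [/(congr1 determinant)]; rewrite detZ !det_mulmx det_adjmx => e _.
have detU (U : 'M[C]_N) : unitary U -> conjc (\det U) * \det U = 1.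
  by move=> uU; rewrite -det_adjmx -det_mulmx unitaryV // det1.
have nzL : \det (lift V) != 0.
  apply/eqP => L0; have /eqP := detU _ (lift_unitary V).
  by rewrite L0 mulr0 eq_sym oner_eq0.
by apply: (mulIf nzL); rewrite -e mulrAC detU // !mul1r.
Qed.

Lemma chiVE (V : PUN) : rho_symmetric rho V ->
  chiV rho V = fun g => phase_of (rho g) (lift V).
Proof.
by move=> symV; apply: funext => g; rewrite (phase_ofE (lift_unitary V) (chiV_spec g symV).1).
Qed.

End Phase.

Section Representations.
Variables (R : realType) (G : topologicalType) (mul : G -> G -> G).
Local Notation C := R[i].

Lemma chiV_in_XG N (rho : G -> 'M[C]_N) (V : PU R N) : (0 < N)%N ->
  unitary_rep mul rho -> rho_symmetric rho V -> in_XG mul (chiV rho V).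
Proof.
move=> N_gt0 [rhoU rhoM rhoC] symV; have spec g := chiV_spec N_gt0 rhoU g symV.
split.
- by move=> g; case: (spec g).
- move=> g h; apply: (chiV_eq N_gt0).
  have -> : adjmx (rho (mul g h)) *m lift V *m rho (mul g h) =
      adjmx (rho h) *m (adjmx (rho g) *m lift V *m rho g) *m rho h.
    by rewrite rhoM adjmxM !mulmxA.
  by rewrite (spec g).1 -scalemxAr -scalemxAl (spec h).1 scalerA mulrC.
- rewrite (chiVE N_gt0 rhoU symV); apply/continuous_CtopP/ccont_phase_of.
    exact/continuous_MtopP.
  exact: mxcontC.
Qed.

Definition shift_mx n : 'M[C]_n := perm_mx (perm (@ordS_inj n)).

Section SumPowers.
Variables (chi : G -> C) (n : nat).
Hypothesis chi_XG : in_XG mul chi.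

Lemma sum_powers_rep_unitary_rep : unitary_rep mul (sum_powers_rep chi n).
Proof.
have [chi1 chiM chiC] := chi_XG.
split.
- move=> g; rewrite /unitary /sum_powers_rep adjmx_diag mul_diag_mx.
  apply/matrixP => i j; rewrite !mxE.
  case: eqVneq => [->|_]; last by rewrite mulr0n mulr0.
  by rewrite !mulr1n normc1_conj // normrX chi1 expr1n.
- move=> g h; rewrite /sum_powers_rep mul_diag_mx; apply/matrixP => i j.
  by rewrite !mxE chiM exprMn mulrnAr.
- apply/continuous_MtopP => i j; rewrite /sum_powers_rep.
  apply: eq_ccontinuous => [g|]; first by rewrite !mxE; reflexivity.
  case: (i == j); rewrite ?mulr1n ?mulr0n; last exact: ccontC.
  by apply/ccontX/continuous_CtopP.
Qed.

Hypothesis chi_expn : forall g, chi g ^+ n = 1.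

Lemma sum_powers_rep_shift g :
  adjmx (sum_powers_rep chi n g) *m shift_mx n *m sum_powers_rep chi n g = chi g *: shift_mx n.
Proof.
have [chi1 _ _] := chi_XG.
rewrite /sum_powers_rep adjmx_diag mul_diag_mx mul_mx_diag.
apply/matrixP => i j; rewrite !mxE permE.
case: eqVneq => [<-|_]; last by rewrite mulr0 mul0r mulr0.
have -> : (ordS i : nat) = (i.+1 %% n)%N by [].
rewrite !mulr1 (expr_mod _ (chi_expn g)) exprSr mulrA.
by rewrite normc1_conjl ?mul1r // normrX chi1 expr1n.
Qed.

End SumPowers.

Lemma chiV_sum_powers_rep (chi : G -> C) (n : nat) : in_XG mul chi -> has_order chi n ->
  exists V : PU R n, rho_symmetric (sum_powers_rep chi n) V /\
                     chiV (sum_powers_rep chi n) V = chi.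
Proof.
move=> chi_XG [n_gt0 chi_expn _]; have [chi1 _ _] := chi_XG.
have [rhoU _ _] := sum_powers_rep_unitary_rep n chi_XG.
pose u : UN R n := exist _ (shift_mx n : Mtop R n) (mem_set (unitary_perm_mx R _)).
exists (\pi_(PU R n) u); apply: (rho_symmetric_pi n_gt0 rhoU (u := u) chi1) => g.
exact: sum_powers_rep_shift.
Qed.

Lemma chiV_tens N N' (rho : G -> 'M[C]_N) (rho' : G -> 'M[C]_N')
    (V : PU R N) (Q : PU R N') :
  (0 < N)%N -> (0 < N')%N -> unitary_rep mul rho -> unitary_rep mul rho' ->
  rho_symmetric rho V -> rho_symmetric rho' Q ->
  rho_symmetric (tens_rep rho rho') (tensPU V Q) /\
  chiV (tens_rep rho rho') (tensPU V Q) = (fun g => chiV rho V g * chiV rho' Q g).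
Proof.
move=> N_gt0 N'_gt0 [rhoU _ _] [rhoU' _ _] symV symQ.
have spec g := chiV_spec N_gt0 rhoU g symV; have spec' g := chiV_spec N'_gt0 rhoU' g symQ.
have NN'_gt0 : (0 < N * N')%N by rewrite muln_gt0 N_gt0.
apply: (rho_symmetric_pi NN'_gt0 (fun g => unitary_tens (rhoU g) (rhoU' g))) => g.
  by rewrite normrM (spec g).2 (spec' g).2 mulr1.
by rewrite /tens_rep /= adjmx_tens !tensmx_mul (spec g).1 (spec' g).1 tensmxZ.
Qed.

Lemma chiV_onePU N (rho : G -> 'M[C]_N) : (0 < N)%N -> unitary_rep mul rho ->
  rho_symmetric rho (onePU R N) /\ chiV rho (onePU R N) = (fun _ => 1).
Proof.
move=> N_gt0 [rhoU _ _]; apply: (rho_symmetric_pi N_gt0 rhoU) => g; first exact: normr1.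
by rewrite /= mulmx1 unitaryV // scale1r.
Qed.

Lemma chiV_tens1 N N' (rho : G -> 'M[C]_N) (rho' : G -> 'M[C]_N') (V : PU R N) :
  (0 < N)%N -> (0 < N')%N -> unitary_rep mul rho -> unitary_rep mul rho' ->
  rho_symmetric rho V ->
  rho_symmetric (tens_rep rho rho') (tensPU V (onePU R N')) /\
  chiV (tens_rep rho rho') (tensPU V (onePU R N')) = chiV rho V.
Proof.
move=> N_gt0 N'_gt0 rep rep' symV.
have [sym1 chi1] := chiV_onePU N'_gt0 rep'.
have [symT ->] := chiV_tens N_gt0 N'_gt0 rep rep' symV sym1.
by split=> //; rewrite chi1; apply: funext => g; rewrite mulr1.
Qed.

End Representations.

Section Cayley.
Variables (R : realType) (N : nat).
Local Notation C := R[i].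
Local Notation I := (1%:M : 'M[C]_N).
Implicit Types A W X : 'M[C]_N.

Lemma comm_mx_IZ A a b : comm_mx (I + a *: A) (I + b *: A).
Proof.
have AI : comm_mx A (I + a *: A) by apply/(comm_mxD (comm_mx1 _))/comm_mxZ.
exact/(comm_mxD (comm_mx1 _))/comm_mxZ/comm_mx_sym.
Qed.

Lemma skew_unitmx A (t : R) : adjmx A = - A -> I + t%:C%C *: A \in unitmx.
Proof.
move=> skewA; rewrite unitmxE unitfE; apply/negP => /det0P [v /negP nzv].
rewrite mulmxDr mulmx1 -scalemxAr => /eqP; rewrite addr_eq0 => /eqP vE.
apply: nzv; apply/eqP/adjmx_dot_eq0.
have vvl : v *m adjmx v = - (t%:C%C *: (v *m A *m adjmx v)).
  by rewrite {1}vE mulNmx -scalemxAl.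
have vvr : v *m adjmx v = t%:C%C *: (v *m A *m adjmx v).
  rewrite {2}vE adjmxN adjmxZ adjmxM skewA conjc_real.
  by rewrite mulmxN -scalemxAr mulNmx mulmxN scalerN opprK mulmxA.
have : (v *m adjmx v) *+ 2 = 0 by rewrite mulr2n {1}vvl vvr addNr.
rewrite -scaler_nat => /eqP; rewrite scaler_eq0 pnatr_eq0 /= => /eqP ->.
by rewrite mxE.
Qed.

Definition cayley A (t : R) : 'M[C]_N := (I - t%:C%C *: A) *m invmx (I + t%:C%C *: A).

Lemma cayley0 A : cayley A 0 = I.
Proof. by rewrite /cayley scale0r subr0 addr0 invmx1 mulmx1. Qed.

Lemma cayley_unitary A t : adjmx A = - A -> unitary (cayley A t).
Proof.
move=> skewA; have uM (s : R) := skew_unitmx s skewA.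
have adjM (s : R) : adjmx (I + s%:C%C *: A) = I + (- s)%:C%C *: A.
  by rewrite adjmxD adjmx1 adjmxZ skewA conjc_real scalerN -scaleNr -real_complexN.
have Mm : I - t%:C%C *: A = I + (- t)%:C%C *: A by rewrite real_complexN scaleNr.
rewrite /unitary; apply: mulmx1C.
rewrite /cayley adjmxM adjmx_invmx // Mm !adjM opprK !mulmxA.
by rewrite -(mulmxA _ (I + t%:C%C *: A)) comm_mx_IZ mulmxA mulVmx // mul1mx mulmxV.
Qed.

Lemma mxcont_cayley A : adjmx A = - A -> mxcontinuous (cayley A).
Proof.
move=> skewA; have cZ : mxcontinuous (fun t : R => t%:C%C *: A).
  by apply: mxcontZ (mxcontC _ _); apply: ccont_real => t; exact: cvg_id.
apply: mxcontM; first exact/mxcontD/mxcontN/cZ/mxcontC.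
apply: mxcont_invmx => [t|]; first exact: skew_unitmx.
exact/mxcontD/cZ/mxcontC.
Qed.

Lemma comm_mx_cayley X A t : adjmx A = - A -> comm_mx X A -> comm_mx X (cayley A t).
Proof.
move=> skewA XA; apply: comm_mxM; first exact/(comm_mxB (comm_mx1 _))/comm_mxZ.
apply: comm_mx_invmx; first exact: skew_unitmx.
exact/(comm_mxD (comm_mx1 _))/comm_mxZ.
Qed.

Definition cayley_inv W : 'M[C]_N := invmx (I + W) *m (I - W).

Section CayleyInverse.
Variable W : 'M[C]_N.
Hypotheses (uW : unitary W) (uIW : I + W \in unitmx).

Lemma mulmx_cayley_inv : (I + W) *m cayley_inv W = I - W.
Proof. by rewrite /cayley_inv mulmxA mulmxV // mul1mx. Qed.

Lemma cayley_inv_skew : adjmx (cayley_inv W) = - cayley_inv W.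
Proof.
have e1 : adjmx (cayley_inv W) *m (I + adjmx W) = I - adjmx W.
  by have := congr1 (@adjmx R N N) mulmx_cayley_inv; rewrite adjmxM !adjmxD adjmxN adjmx1.
have e2 : adjmx (cayley_inv W) *m (I + W) = W - I.
  have := congr1 (mulmxr W) e1; rewrite /= -mulmxA !mulmxDl !mul1mx unitaryV //.
  by rewrite mulNmx unitaryV // addrC => ->.
have IWW : comm_mx (I - W) (I + W).
  exact/(comm_mxD (comm_mx1 _))/comm_mx_sym/(comm_mxB (comm_mx1 _))/comm_mx_refl.
rewrite -[LHS]mulmx1 -(mulmxV uIW) mulmxA e2 /cayley_inv.
by rewrite -(comm_mx_invmx uIW IWW) -mulNmx opprB.
Qed.

Lemma cayley_invK : cayley (cayley_inv W) 1 = W.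
Proof.
set A := cayley_inv W; have uA := skew_unitmx 1 cayley_inv_skew.
rewrite scale1r in uA; rewrite /cayley scale1r.
suff -> : I - A = W *m (I + A) by rewrite -mulmxA mulmxV // mulmx1.
have e1 : (I + W) *m (I + A) = I + I.
  by rewrite mulmxDr mulmx1 mulmx_cayley_inv addrACA subrr addr0.
have e2 : (I + W) *m (I - A) = W + W.
  by rewrite mulmxBr mulmx1 mulmx_cayley_inv opprB addrC addrA subrK.
have WIW : comm_mx W (I + W) by exact/(comm_mxD (comm_mx1 _))/comm_mx_refl.
rewrite -[I - A](mulKmx uIW) -[W *m (I + A)](mulKmx uIW); congr (_ *m _).
by rewrite e2 mulmxA -WIW -mulmxA e1 mulmxDr mulmx1.
Qed.

Lemma comm_mx_cayley_inv X : comm_mx X W -> comm_mx X (cayley_inv W).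
Proof.
move=> XW; apply: comm_mxM; last exact: comm_mxB (comm_mx1 _) XW.
exact: comm_mx_invmx uIW (comm_mxD (comm_mx1 _) XW).
Qed.

End CayleyInverse.

End Cayley.

Section PhaseShift.
Variables (R : realType) (N : nat).
Local Notation C := R[i].

Definition circle_point (k : nat) : C :=
  let z := Complex 1 k%:R in z / conjc z.

Lemma circle_point_norm k : `|circle_point k| = 1.
Proof.
have nz : Complex 1 k%:R != 0 :> C by rewrite eq_complex negb_and oner_eq0.
by rewrite normrM normfV normcJ mulfV // normr_eq0.
Qed.

Lemma circle_point_inj : injective circle_point.
Proof.
have nz k : conjc (Complex 1 k%:R) != 0 :> C by rewrite conjc_eq0 eq_complex negb_and oner_eq0.
move=> k l /eqP; rewrite /circle_point eqr_div ?nz // => /eqP /(congr1 (@complex.Im R)) /=.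
rewrite !mul1r !mulr1 => e; have /eqP : (k%:R : R) = l%:R by lra.
by rewrite eqr_nat => /eqP.
Qed.

(* 1 + l K is singular only if -1/l is one of the at most N eigenvalues of K. *)
Lemma exists_phase_unitmx (K : 'M[C]_N) :
  exists l : C, `|l| = 1 /\ 1%:M + l *: K \in unitmx.
Proof.
apply: contrapT => none.
have root_k k : root (char_poly K) (- (circle_point k)^-1).
  have nz : circle_point k != 0 by rewrite -normr_eq0 circle_point_norm oner_eq0.
  rewrite -eigenvalue_root_char; apply/eigenvalueP.
  have : 1%:M + circle_point k *: K \notin unitmx.
    by apply/negP => u; apply: none; exists (circle_point k); rewrite circle_point_norm.
  rewrite unitmxE unitfE negbK => /det0P [v nzv vK]; exists v => //.
  move: vK; rewrite mulmxDr mulmx1 -scalemxAr => /eqP; rewrite addrC addr_eq0 => /eqP vK.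
  by rewrite -[v *m K]scale1r -(mulVf nz) -scalerA vK scalerN scaleNr.
set rs := [seq - (circle_point k)^-1 | k <- iota 0 N.+1].
have := @max_poly_roots _ (char_poly K) rs.
rewrite monic_neq0 ?char_poly_monic // size_map size_iota size_char_poly ltnn.
have -> : all (root (char_poly K)) rs by apply/allP => z /mapP [k _ ->].
rewrite map_inj_uniq ?iota_uniq; first by move/(_ isT isT isT).
by move=> k l /oppr_inj /invr_inj /circle_point_inj.
Qed.

End PhaseShift.

Lemma exists_root_seq (F : closedFieldType) (p : {poly F}) :
  p != 0 -> exists rs : seq F, forall z, root p z -> z \in rs.
Proof.
move=> nzp; have [rs prs] := closed_field_poly_normal p.
by exists rs => z; rewrite {1}prs rootZ ?lead_coef_eq0 // root_prod_XsubC.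
Qed.

Section FiniteRange.
Variable R : realType.

Lemma IVT_finite_range (F : R -> R) (S : seq R) : {within `[0, 1], continuous F} ->
  (forall t, t \in `[0, 1]%R -> F t \in S) -> F 1 = F 0.
Proof.
move=> cF FS; apply: contrapT => /eqP F10.
(* Otherwise F takes the (size S).+1 distinct intermediate values v k. *)
pose v (k : nat) := F 0 + (F 1 - F 0) / k.+1%:R.
have v_in k : v k \in S.
  have [t t01 <-] : exists2 t, t \in `[0, 1]%R & F t = v k.
    apply: IVT => //; rewrite ge_min le_max /v.
    have r0 : 0 <= (k.+1%:R : R)^-1 by rewrite invr_ge0.
    have r1 : (k.+1%:R : R)^-1 <= 1 by rewrite invf_le1 ?ler1n.
    move: r0 r1; set r := (k.+1%:R : R)^-1; set a := F 0; set b := F 1 => r0 r1.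
    by case: (leP a b) => ?; apply/andP; split; apply/orP; [left|right|right|left]; nra.
  exact: FS.
have v_inj : injective v.
  have nz : F 1 - F 0 != 0 by rewrite subr_eq0.
  by move=> k l /addrI /(mulfI nz) /invr_inj /eqP; rewrite eqr_nat eqSS => /eqP.
have sub : {subset [seq v k | k <- iota 0 (size S).+1] <= S}.
  by move=> _ /mapP [k _ ->].
have := uniq_leq_size _ sub.
by rewrite size_map size_iota ltnn map_inj_uniq ?iota_uniq // => /(_ isT).
Qed.

Lemma IVT_finite_range_complex (f : R -> Ctop R) (S : seq R[i]) :
  {within `[0, 1], continuous f} ->
  (forall t, t \in `[0, 1]%R -> f t \in S) -> f 1 = f 0.
Proof.
move=> cf fS; have [cRe cIm] := (continuous_CtopP (fun z : Ctop R => z)).1 (fun z => cvg_id).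
apply/eqP; rewrite eq_complex; apply/andP; split; apply/eqP.
- apply: (@IVT_finite_range (fun t => complex.Re (f t)) (map (@complex.Re R) S)).
    by move=> t; apply: continuous_comp (cf t) (cRe _).
  by move=> t t01; apply: map_f (fS t t01).
- apply: (@IVT_finite_range (fun t => complex.Im (f t)) (map (@complex.Im R) S)).
    by move=> t; apply: continuous_comp (cf t) (cIm _).
  by move=> t t01; apply: map_f (fS t t01).
Qed.

End FiniteRange.

Section SymmetricPaths.
Variables (R : realType) (N : nat).
Local Notation C := R[i].
Local Notation PUN := (PU R N).
Hypothesis N_gt0 : (0 < N)%N.
Variables (G : Type) (rho : G -> 'M[C]_N).
Hypothesis rho_unitary : forall g, unitary (rho g).

Lemma comm_mx_lift_ratio (V W : PUN) g : rho_symmetric rho V -> rho_symmetric rho W ->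
  chiV rho V = chiV rho W -> comm_mx (rho g) (lift W *m adjmx (lift V)).
Proof.
move=> symV symW chiVW; have [eV nV] := chiV_spec N_gt0 rho_unitary g symV.
have [eW _] := chiV_spec N_gt0 rho_unitary g symW; rewrite -chiVW in eW.
have eV' : adjmx (rho g) *m adjmx (lift V) *m rho g = conjc (chiV rho V g) *: adjmx (lift V).
  by have := congr1 (@adjmx R N N) eV; rewrite !adjmxM adjmxK adjmxZ mulmxA.
rewrite /comm_mx -[_ *m rho g]scale1r; apply/(conj_scaleP rho_unitary _ _ (normr1 _)).
have -> : adjmx (rho g) *m (lift W *m adjmx (lift V)) *m rho g =
    (adjmx (rho g) *m lift W *m rho g) *m (adjmx (rho g) *m adjmx (lift V) *m rho g).
  by rewrite !mulmxA -(mulmxA _ (rho g)) rho_unitary mulmx1.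
by rewrite eW eV' -scalemxAl -scalemxAr scalerA normc1_conj // conjc1.
Qed.

Lemma chiV_eq_sym_path_connected (V W : PUN) :
  rho_symmetric rho V -> rho_symmetric rho W ->
  chiV rho V = chiV rho W -> sym_path_connected rho V W.
Proof.
move=> symV symW chiVW; set K := lift W *m adjmx (lift V).
have uK : unitary K := unitaryM (lift_unitary W) (unitary_adj (lift_unitary V)).
have [l [l1 ulK]] := exists_phase_unitmx K.
have ulK' : unitary (l *: K) := unitaryZ l1 uK.
set A := cayley_inv (l *: K); have skewA : adjmx A = - A := cayley_inv_skew ulK' ulK.
have uP t : unitary (cayley A t *m lift V).
  exact: unitaryM (cayley_unitary t skewA) (lift_unitary V).
pose u t : UN R N := exist _ (cayley A t *m lift V : Mtop R N) (mem_set (uP t)).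
have uE t : Uval (u t) = cayley A t *m lift V by [].
exists (fun t => \pi_PUN (u t)); split.
- apply: continuous_subspaceT => t.
  apply: (@continuous_comp _ _ _ u \pi_PUN); last exact: pi_continuous.
  apply: (@continuous_comp_initial _ _ _ (@set_val _ _)); apply/continuous_MtopP.
  exact: mxcontM (mxcont_cayley skewA) (mxcontC _ _).
- rewrite -[RHS]reprK; apply/piPU_eqP; exists 1.
  by rewrite normr1 scale1r uE cayley0 mul1mx.
- rewrite -[RHS]reprK; apply/piPU_eqP; exists l; split=> //.
  by rewrite uE cayley_invK // -scalemxAl /K -mulmxA (unitaryV (lift_unitary V)) mulmx1.
move=> t _; suff [] : rho_symmetric rho (\pi_PUN (u t)) /\ chiV rho (\pi_PUN (u t)) = chiV rho V by [].
apply: (rho_symmetric_pi N_gt0 rho_unitary) => g.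
  by case: (chiV_spec N_gt0 rho_unitary g symV).
have Pg : comm_mx (rho g) (cayley A t).
  apply: (comm_mx_cayley t skewA); apply: (comm_mx_cayley_inv ulK).
  exact/comm_mxZ/comm_mx_lift_ratio.
have -> : adjmx (rho g) *m Uval (u t) *m rho g =
    cayley A t *m (adjmx (rho g) *m lift V *m rho g).
  by rewrite uE; move: (cayley A t) Pg => P /(comm_mx_adj (rho_unitary g)) Pg; rewrite !mulmxA Pg.
by rewrite (chiV_spec N_gt0 rho_unitary g symV).1 -scalemxAr.
Qed.

Lemma sym_path_connected_chiV_eq (V W : PUN) :
  rho_symmetric rho V -> rho_symmetric rho W ->
  sym_path_connected rho V W -> chiV rho V = chiV rho W.
Proof.
move=> symV symW [gam [cgam gam0 gam1 symgam]]; apply: funext => g.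
have [rs rsP] : exists rs : seq C, forall z, z ^+ N = 1 -> z \in rs.
  have nz : 'X^N - 1 != 0 :> {poly C} by rewrite -size_poly_eq0 size_XnsubC.
  have [rs rsP] := exists_root_seq nz.
  by exists rs => z zN; apply: rsP; rewrite rootE !hornerE zN subrr.
(* phase_of does not see the phase of the lift, so phi is continuous on PU. *)
pose phi (X : PUN) : Ctop R := phase_of (rho g) (lift X).
have cphi : continuous phi.
  apply: (@repr_comp_continuous _ _ _ (fun u : UN R N => phase_of (rho g) (Uval u) : Ctop R)).
    apply/continuous_CtopP/ccont_phase_of; first exact: mxcontC.
    by apply/continuous_MtopP; exact: (@initial_continuous _ _ (@set_val _ _)).
  by move=> u v /eqP /piPU_eqP [c [c1 ->]]; rewrite phase_ofZ.
have phiE X : rho_symmetric rho X -> phi X = chiV rho X g.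
  by move=> symX; rewrite (chiVE N_gt0 rho_unitary symX).
rewrite -(phiE V symV) -(phiE W symW) -gam0 -gam1; symmetry.
apply: (@IVT_finite_range_complex _ (phi \o gam) rs) => [t|t t01].
  exact: continuous_comp (cgam t) (cphi _).
have symt := symgam t t01; rewrite /= phiE //.
by have := rsP _ (chiV_expN N_gt0 rho_unitary g symt).
Qed.

End SymmetricPaths.

Theorem mainTheorem8 (R : realType) (G : topologicalType)
    (mul : G -> G -> G) (inv : G -> G) (one : G) :
  topological_group mul inv one ->
  (forall (N : nat) (rho : G -> 'M[R[i]]_N), (0 < N)%N -> unitary_rep mul rho ->
    forall V : PU R N, rho_symmetric rho V ->
      in_XG mul (chiV rho V) /\
      (forall W : UN R N, \pi_(PU R N) W = V ->
         forall g, adjmx (rho g) *m Uval W *m rho g = chiV rho V g *: Uval W))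
  /\
  (forall (N : nat) (rho : G -> 'M[R[i]]_N), (0 < N)%N -> unitary_rep mul rho ->
    forall V W : PU R N, rho_symmetric rho V -> rho_symmetric rho W ->
      (sym_path_connected rho V W <-> chiV rho V = chiV rho W))
  /\
  (forall (N : nat) (rho : G -> 'M[R[i]]_N), (0 < N)%N -> unitary_rep mul rho ->
    forall V : PU R N, rho_symmetric rho V ->
      exists n : nat, (0 < n)%N /\ forall g, chiV rho V g ^+ n = 1)
  /\
  (forall (chi : G -> R[i]) (n : nat), in_XG mul chi -> has_order chi n ->
    unitary_rep mul (sum_powers_rep chi n) /\
    exists V : PU R n, rho_symmetric (sum_powers_rep chi n) V /\
                       chiV (sum_powers_rep chi n) V = chi)
  /\
  (forall (N N' : nat) (rho : G -> 'M[R[i]]_N) (rho' : G -> 'M[R[i]]_N'),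
    (0 < N)%N -> (0 < N')%N -> unitary_rep mul rho -> unitary_rep mul rho' ->
    forall (V : PU R N) (Q : PU R N'),
      rho_symmetric rho V -> rho_symmetric rho' Q ->
      rho_symmetric (tens_rep rho rho') (tensPU V Q) /\
      chiV (tens_rep rho rho') (tensPU V Q) = (fun g => chiV rho V g * chiV rho' Q g))
  /\
  (forall (N N' : nat) (rho : G -> 'M[R[i]]_N) (rho' : G -> 'M[R[i]]_N'),
    (0 < N)%N -> (0 < N')%N -> unitary_rep mul rho -> unitary_rep mul rho' ->
    forall V : PU R N, rho_symmetric rho V ->
      rho_symmetric (tens_rep rho rho') (tensPU V (onePU R N')) /\
      chiV (tens_rep rho rho') (tensPU V (onePU R N')) = chiV rho V).
Proof.
move=> _; split; [|split; [|split; [|split; [|split]]]].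
- move=> N rho N_gt0 rep V symV; split; first exact: chiV_in_XG.
  by case: rep => rhoU _ _ W WV g; apply: chiV_pi.
- move=> N rho N_gt0 [rhoU _ _] V W symV symW; split.
    exact: sym_path_connected_chiV_eq.
  exact: chiV_eq_sym_path_connected.
- move=> N rho N_gt0 [rhoU _ _] V symV; exists N; split=> // g.
  exact: chiV_expN.
- move=> chi n chi_XG chi_order; split; first exact: sum_powers_rep_unitary_rep.
  exact: chiV_sum_powers_rep chi_XG chi_order.
- move=> N N' rho rho' N_gt0 N'_gt0 rep rep' V Q; exact: chiV_tens N_gt0 N'_gt0 rep rep'.
- move=> N N' rho rho' N_gt0 N'_gt0 rep rep' V; exact: chiV_tens1 N_gt0 N'_gt0 rep rep'.
Qed.
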